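(* Consider the two-agent series component maintenance game with repair costs $C_1,C_2>0$ and prior working probabilities $0<p_1,p_2<1$, and write $\overline{p}=1-p$. Let $R\subset\mathbb{R}^+\times\mathbb{R}^+$ be the set of pairs $(x,y)$ satisfying $x\le\overline{p_1}$, $y\le\overline{p_2}$, and ($x\le\overline{p_1}p_2$ or $y\le\overline{p_2}p_1$). Let $s^*=\min_{(x,y)\in R}\|(C_1,C_2)-(x,y)\|_1$. Then for every $s>s^*$ there exists a subsidy scheme $\mathbb{S}$ with total subsidy $s$ such that the system functions (i.e. $\phi(\bm{x}')=1$, both components work after the actions) in every pure Nash equilibrium of the subsidized game. Moreover, any subsidy scheme that guarantees the system functions in every pure Nash equilibrium has total subsidy at least $s^*$.
   Context: Two-agent series component maintenance game: agent $i\in\{1,2\}$ owns component $i$ with independent random state $x_i\in\{0,1\}$, $\Pr[x_i=1]=p_i$; action $s_i\in\{0,1\}$ (1 = repair RE, 0 = do nothing DN); post-action state $x_i'=\max\{x_i,s_i\}$; system state $\phi(\bm{x}')=x_1'\wedge x_2'$. Expected cost of agent $i$: $l_i(s)=C_is_i+1-\Pr[x_1'=x_2'=1]$. Explicitly, (agent 1, agent 2) costs are: DN-DN: $(1-p_1p_2,1-p_1p_2)$; DN-RE: $(\overline{p_1},\overline{p_1}+C_2)$; RE-DN: $(\overline{p_2}+C_1,\overline{p_2})$; RE-RE: $(C_1,C_2)$. Subsidy schemes subsidize repair: agent $i$ receives a nonnegative amount $\sigma_i$ when it repairs, so its subsidized cost is $l_i(s)-\sigma_is_i$; the total subsidy of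 the scheme is $\sigma_1+\sigma_2$. *)

From Stdlib Require Import Reals.
Open Scope R_scope.

(* Actions: true = repair (RE, s_i = 1), false = do nothing (DN, s_i = 0). *)

(* Pr[x_i' = 1] where x_i' = max(x_i, s_i) and Pr[x_i = 1] = p_i. *)
Definition pwork_i (p : R) (s : bool) : R := if s then 1 else p.

(* Pr[x_1' = x_2' = 1] (components independent). *)
Definition pwork (p1 p2 : R) (s1 s2 : bool) : R :=
  pwork_i p1 s1 * pwork_i p2 s2.

Definition cost1 (C1 p1 p2 : R) (s1 s2 : bool) : R :=
  (if s1 then C1 else 0) + 1 - pwork p1 p2 s1 s2.
Definition cost2 (C2 p1 p2 : R) (s1 s2 : bool) : R :=
  (if s2 then C2 else 0) + 1 - pwork p1 p2 s1 s2.

Definition sub_cost1 (C1 p1 p2 sg1 : R) (s1 s2 : bool) : R :=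
  cost1 C1 p1 p2 s1 s2 - (if s1 then sg1 else 0).
Definition sub_cost2 (C2 p1 p2 sg2 : R) (s1 s2 : bool) : R :=
  cost2 C2 p1 p2 s1 s2 - (if s2 then sg2 else 0).

Definition is_PNE (C1 C2 p1 p2 sg1 sg2 : R) (s1 s2 : bool) : Prop :=
  (forall t1 : bool, sub_cost1 C1 p1 p2 sg1 s1 s2 <= sub_cost1 C1 p1 p2 sg1 t1 s2) /\
  (forall t2 : bool, sub_cost2 C2 p1 p2 sg2 s1 s2 <= sub_cost2 C2 p1 p2 sg2 s1 t2).

(* The system functions: phi(x') = 1 (with probability one). *)
Definition system_functions (p1 p2 : R) (s1 s2 : bool) : Prop :=
  pwork p1 p2 s1 s2 = 1.

Definition guarantees (C1 C2 p1 p2 sg1 sg2 : R) : Prop :=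
  forall s1 s2 : bool, is_PNE C1 C2 p1 p2 sg1 sg2 s1 s2 -> system_functions p1 p2 s1 s2.

Definition inRegion (p1 p2 x y : R) : Prop :=
  0 <= x /\ 0 <= y /\ x <= 1 - p1 /\ y <= 1 - p2 /\
  (x <= (1 - p1) * p2 \/ y <= (1 - p2) * p1).

Definition dist1 (C1 C2 x y : R) : R := Rabs (C1 - x) + Rabs (C2 - y).

Definition is_min_dist (C1 C2 p1 p2 s_star : R) : Prop :=
  (exists x y, inRegion p1 p2 x y /\ dist1 C1 C2 x y = s_star) /\
  (forall x y, inRegion p1 p2 x y -> s_star <= dist1 C1 C2 x y).

(* A subsidy only lowers agent i's repair cost to the net cost C_i - sigma_i.
   Checking the four action profiles, the system works in every pure Nash
   equilibrium exactly when the net costs (x, y) satisfy the strict form of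
   the inequalities defining R: otherwise one of DN-DN, RE-DN, DN-RE is an
   equilibrium.  A guaranteeing scheme therefore yields the point
   (max x 0, max y 0) of R at L1 distance at most sigma_1 + sigma_2 from
   (C_1, C_2); conversely, aiming slightly below a minimiser of the distance
   gives a guaranteeing scheme of any total above s*. *)

From Stdlib Require Import Reals Lra Psatz.
Open Scope R_scope.

Definition inRegion_strict (p1 p2 x y : R) : Prop :=
  x < 1 - p1 /\ y < 1 - p2 /\ (x < (1 - p1) * p2 \/ y < (1 - p2) * p1).

Section SubsidizedGame.

Variables C1 C2 p1 p2 sg1 sg2 : R.

Lemma is_PNE_DN_DN :
  is_PNE C1 C2 p1 p2 sg1 sg2 false false <->
  (1 - p1) * p2 <= C1 - sg1 /\ (1 - p2) * p1 <= C2 - sg2.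
Proof.
  unfold is_PNE, sub_cost1, sub_cost2, cost1, cost2, pwork, pwork_i.
  split.
  - intros [H1 H2]. specialize (H1 true). specialize (H2 true). lra.
  - intros [H1 H2]. split; intros []; lra.
Qed.

Lemma is_PNE_RE_DN :
  is_PNE C1 C2 p1 p2 sg1 sg2 true false <->
  C1 - sg1 <= (1 - p1) * p2 /\ 1 - p2 <= C2 - sg2.
Proof.
  unfold is_PNE, sub_cost1, sub_cost2, cost1, cost2, pwork, pwork_i.
  split.
  - intros [H1 H2]. specialize (H1 false). specialize (H2 true). lra.
  - intros [H1 H2]. split; intros []; lra.
Qed.

Lemma is_PNE_DN_RE :
  is_PNE C1 C2 p1 p2 sg1 sg2 false true <->
  1 - p1 <= C1 - sg1 /\ C2 - sg2 <= (1 - p2) * p1.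
Proof.
  unfold is_PNE, sub_cost1, sub_cost2, cost1, cost2, pwork, pwork_i.
  split.
  - intros [H1 H2]. specialize (H1 true). specialize (H2 false). lra.
  - intros [H1 H2]. split; intros []; lra.
Qed.

Hypotheses (hp1 : 0 < p1 < 1) (hp2 : 0 < p2 < 1).

Lemma system_functions_iff (s1 s2 : bool) :
  system_functions p1 p2 s1 s2 <-> s1 = true /\ s2 = true.
Proof.
  unfold system_functions, pwork, pwork_i.
  destruct s1, s2; split; try easy; intros H; nra.
Qed.

Lemma guarantees_iff_no_failing_PNE :
  guarantees C1 C2 p1 p2 sg1 sg2 <->
  ~ is_PNE C1 C2 p1 p2 sg1 sg2 false false /\
  ~ is_PNE C1 C2 p1 p2 sg1 sg2 true false /\
  ~ is_PNE C1 C2 p1 p2 sg1 sg2 false true.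
Proof.
  unfold guarantees. split.
  - intros G. repeat split; intros HP; apply G, system_functions_iff in HP;
      destruct HP; discriminate.
  - intros (Hff & Htf & Hft) [] [] HP; apply system_functions_iff; try easy;
      exfalso; auto.
Qed.

Lemma guarantees_iff :
  guarantees C1 C2 p1 p2 sg1 sg2 <-> inRegion_strict p1 p2 (C1 - sg1) (C2 - sg2).
Proof.
  rewrite guarantees_iff_no_failing_PNE, is_PNE_DN_DN, is_PNE_RE_DN, is_PNE_DN_RE.
  unfold inRegion_strict.
  assert (h1 : (1 - p1) * p2 < 1 - p1) by nra.
  assert (h2 : (1 - p2) * p1 < 1 - p2) by nra.
  split.
  - intros (Hff & Htf & Hft).
    destruct (Rlt_or_le (C1 - sg1) ((1 - p1) * p2)) as [hx | hx].
    + destruct (Rlt_or_le (C2 - sg2) (1 - p2)) as [hy | hy].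
      * repeat split; lra.
      * exfalso. apply Htf. lra.
    + destruct (Rlt_or_le (C2 - sg2) ((1 - p2) * p1)) as [hy | hy].
      * destruct (Rlt_or_le (C1 - sg1) (1 - p1)) as [hx' | hx'].
        -- repeat split; lra.
        -- exfalso. apply Hft. lra.
      * exfalso. apply Hff. lra.
  - intros (hx & hy & [hxy | hxy]); repeat split; intros []; lra.
Qed.

End SubsidizedGame.

Lemma inRegion_strict_lt (p1 p2 x y x' y' : R) :
  inRegion p1 p2 x y -> x' < x -> y' < y -> inRegion_strict p1 p2 x' y'.
Proof.
  intros (_ & _ & hx & hy & hxy) hx' hy'.
  split; [lra | split; [lra | destruct hxy; [left | right]; lra]].
Qed.

Lemma inRegion_strict_Rmax0 (p1 p2 x y : R) : 0 < p1 < 1 -> 0 < p2 < 1 ->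
  inRegion_strict p1 p2 x y -> inRegion p1 p2 (Rmax x 0) (Rmax y 0).
Proof.
  intros hp1 hp2 (hx & hy & hxy).
  assert (0 < (1 - p1) * p2) by nra. assert (0 < (1 - p2) * p1) by nra.
  repeat split; try apply Rmax_r; try (apply Rmax_lub; lra).
  destruct hxy; [left | right]; apply Rmax_lub; lra.
Qed.

Lemma Rabs_sub_Rmax0 (C sg : R) : 0 <= C -> 0 <= sg ->
  Rabs (C - Rmax (C - sg) 0) <= sg.
Proof.
  intros. unfold Rmax. destruct Rle_dec; unfold Rabs; destruct Rcase_abs; lra.
Qed.

Lemma Rmax0_le_Rabs (x : R) : Rmax x 0 <= Rabs x.
Proof. apply Rmax_lub; [apply Rle_abs | apply Rabs_pos]. Qed.

Theorem theorem2 (C1 C2 p1 p2 s_star : R)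
  (hC1 : 0 < C1) (hC2 : 0 < C2)
  (hp1 : 0 < p1 < 1) (hp2 : 0 < p2 < 1)
  (hs : is_min_dist C1 C2 p1 p2 s_star) :
  (forall s : R, s_star < s ->
     exists sg1 sg2 : R, 0 <= sg1 /\ 0 <= sg2 /\ sg1 + sg2 = s /\
       guarantees C1 C2 p1 p2 sg1 sg2) /\
  (forall sg1 sg2 : R, 0 <= sg1 -> 0 <= sg2 ->
     guarantees C1 C2 p1 p2 sg1 sg2 -> s_star <= sg1 + sg2).
Proof.
  destruct hs as [[x0 [y0 [Hin Hd]]] Hmin]. split.
  - intros s Hs.
    pose proof (Rmax0_le_Rabs (C1 - x0)). pose proof (Rmax0_le_Rabs (C2 - y0)).
    pose proof (Rmax_l (C1 - x0) 0). pose proof (Rmax_l (C2 - y0) 0).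
    pose proof (Rmax_r (C1 - x0) 0). pose proof (Rmax_r (C2 - y0) 0).
    set (a := Rmax (C1 - x0) 0) in *. set (b := Rmax (C2 - y0) 0) in *.
    assert (Hab : a + b <= s_star) by (rewrite <- Hd; unfold dist1; lra).
    set (e := (s - (a + b)) / 2).
    assert (He : 0 < e) by (unfold e; lra).
    exists (a + e), (b + e).
    split; [lra | split; [lra | split; [unfold e; lra |]]].
    apply guarantees_iff; auto.
    apply (inRegion_strict_lt _ _ _ _ _ _ Hin); lra.
  - intros sg1 sg2 h1 h2 G. apply guarantees_iff in G; auto.
    apply (Rle_trans _ _ _ (Hmin _ _ (inRegion_strict_Rmax0 _ _ _ _ hp1 hp2 G))).
    unfold dist1.
    pose proof (Rabs_sub_Rmax0 C1 sg1 (Rlt_le _ _ hC1) h1).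
    pose proof (Rabs_sub_Rmax0 C2 sg2 (Rlt_le _ _ hC2) h2).
    lra.
Qed.
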